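(* Let $(A,\mu,\alpha)$ be a Hom-associative algebra and $r=\sum_i x_i\otimes y_i\in A\otimes A$ with $(\alpha\otimes\alpha)(r)=r$ and $r$ a solution of the associative Hom-Yang-Baxter equation. Define $R:A\to A$ by $R(a)=\sum_i\alpha(x_i)(ay_i)$ (which equals $\sum_i(x_ia)\alpha(y_i)$). Then $R$ is an $\alpha^2$-Rota-Baxter operator, i.e. $R$ commutes with $\alpha$ and $R(\alpha^2(a))R(\alpha^2(b))=R\big(\alpha^2(a)R(b)+R(a)\alpha^2(b)\big)$ for all $a,b\in A$.
   Context: A Hom-associative algebra $(A,\mu,\alpha)$: linear space, bilinear $\mu(x\otimes y)=xy$, linear $\alpha$ with $\alpha(xy)=\alpha(x)\alpha(y)$ and $\alpha(x)(yz)=(xy)\alpha(z)$. For $r=\sum_ix_i\otimes y_i$ with $(\alpha\otimes\alpha)(r)=r$, $r$ solves the associative Hom-Yang-Baxter equation if $\sum_{i,j}\alpha(x_i)\otimes y_ix_j\otimes\alpha(y_j)=\sum_{i,j}x_ix_j\otimes\alpha(y_j)\otimes\alpha(y_i)+\sum_{i,j}\alpha(x_i)\otimes\alpha(x_j)\otimes y_jy_i$. *)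

From HB Require Import structures.
From mathcomp Require Import all_boot all_order all_algebra.
Set Implicit Arguments. Unset Strict Implicit. Unset Printing Implicit Defensive.
Import GRing.Theory.
Local Open Scope ring_scope.

Definition bilinearP (K : fieldType) (U V W : lmodType K) (f : U -> V -> W) :=
  (forall u, linear (f u)) /\ (forall v, linear (fun u => f u v)).

Definition trilinearP (K : fieldType) (U V W M : lmodType K)
    (f : U -> V -> W -> M) :=
  (forall v w, linear (fun u => f u v w)) /\
  (forall u w, linear (fun v => f u v w)) /\
  (forall u v, linear (f u v)).

Definition hom_assoc (K : fieldType) (A : lmodType K)
    (mu : A -> A -> A) (alpha : A -> A) :=
  [/\ bilinearP mu, linear alpha,
      (forall x y, alpha (mu x y) = mu (alpha x) (alpha y)) &
      (forall x y z, mu (alpha x) (mu y z) = mu (mu x y) (alpha z))].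

(* An element sum_i x_i (x) y_i of A (x) A is represented by the list of
   pairs (x_i, y_i); equality in A (x) A is expressed via the universal
   property of the tensor product: two sums of pure tensors are equal iff
   every bilinear map into every K-module agrees on them. *)
Definition tens2_eq (K : fieldType) (A : lmodType K) (s t : seq (A * A)) :=
  forall (M : lmodType K) (f : A -> A -> M), bilinearP f ->
    \sum_(p <- s) f p.1 p.2 = \sum_(p <- t) f p.1 p.2.

Definition tens3_eq (K : fieldType) (A : lmodType K) (s t : seq (A * A * A)) :=
  forall (M : lmodType K) (f : A -> A -> A -> M), trilinearP f ->
    \sum_(p <- s) f p.1.1 p.1.2 p.2 = \sum_(p <- t) f p.1.1 p.1.2 p.2.

Definition alpha_inv (K : fieldType) (A : lmodType K) (alpha : A -> A)
    (r : seq (A * A)) :=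
  tens2_eq [seq (alpha p.1, alpha p.2) | p <- r] r.

Definition AHYBE (K : fieldType) (A : lmodType K) (mu : A -> A -> A)
    (alpha : A -> A) (r : seq (A * A)) :=
  tens3_eq [seq (alpha p.1, mu p.2 q.1, alpha q.2) | p <- r, q <- r]
    ([seq (mu p.1 q.1, alpha q.2, alpha p.2) | p <- r, q <- r] ++
     [seq (alpha p.1, alpha q.1, mu q.2 p.2) | p <- r, q <- r]).

Definition Rop (K : fieldType) (A : lmodType K) (mu : A -> A -> A)
    (alpha : A -> A) (r : seq (A * A)) (a : A) : A :=
  \sum_(p <- r) mu (alpha p.1) (mu a p.2).

(* Contract the associative Hom-Yang-Baxter equation with the trilinear form
   (u, v, w) |-> ((alpha u * alpha^2 a) * alpha^2 v) * (alpha^3 b * alpha^2 w).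
   Using (alpha (x) alpha)(r) = r to insert enough powers of alpha, and then
   Hom-associativity to move brackets, the left-hand side of the contracted
   equation becomes R(alpha^2 a) R(alpha^2 b), while its two right-hand sums
   become R(R(a) alpha^2 b) and R(alpha^2 a R(b)). *)

From HB Require Import structures.
From mathcomp Require Import all_boot all_order all_algebra.
Import GRing.Theory.
Set Implicit Arguments. Unset Strict Implicit. Unset Printing Implicit Defensive.
Local Open Scope ring_scope.

Section LinearFunctions.
Variables (K : fieldType) (U V W M : lmodType K).

Lemma linear_fun_sum (f : U -> V) : linear f ->
  forall (I : Type) (s : seq I) (E : I -> U), f (\sum_(i <- s) E i) = \sum_(i <- s) f (E i).
Proof.
move=> f_lin I s E.
pose fL : {linear U -> V} := HB.pack f (GRing.isLinear.Build K U V *:%R f f_lin).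
exact: (raddf_sum fL).
Qed.

Lemma linear_fun_add (f : U -> V) : linear f -> forall u v, f (u + v) = f u + f v.
Proof. by move=> f_lin u v; have := f_lin 1 u v; rewrite !scale1r. Qed.

Lemma linear_iter (f : U -> U) n : linear f -> linear (iter n f).
Proof. by move=> f_lin; elim: n => [|n IHn] c u v //=; rewrite IHn f_lin. Qed.

Lemma bilinearP_comp (f : V -> W -> M) (g : U -> V) (h : U -> W) :
  bilinearP f -> linear g -> linear h -> bilinearP (fun u v => f (g u) (h v)).
Proof.
move=> [f_linr f_linl] g_lin h_lin; split=> [u|v] c x y /=.
- by rewrite h_lin f_linr.
- by rewrite g_lin (f_linl (h v)).
Qed.

End LinearFunctions.

Section AlphaInvariance.
Variables (K : fieldType) (A : lmodType K) (alpha : A -> A) (r : seq (A * A)).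
Hypotheses (alpha_lin : linear alpha) (r_inv : alpha_inv alpha r).

Lemma alpha_inv_iter n (M : lmodType K) (f : A -> A -> M) : bilinearP f ->
  \sum_(p <- r) f (iter n alpha p.1) (iter n alpha p.2) = \sum_(p <- r) f p.1 p.2.
Proof.
elim: n f => [//|n IHn] f f_bil.
under eq_bigr => p _ do rewrite !iterSr.
have := r_inv (f := fun u v => f (iter n alpha u) (iter n alpha v)).
rewrite big_map /= => -> //; first exact: IHn.
by apply: bilinearP_comp => //; exact: linear_iter.
Qed.

Lemma alpha_inv_iter2 k l (M : lmodType K) (G : A -> A -> A -> A -> M) :
  (forall x' y', bilinearP (fun x y => G x y x' y')) ->
  (forall x y, bilinearP (G x y)) ->
  \sum_(p <- r) \sum_(q <- r)
     G (iter k alpha p.1) (iter k alpha p.2) (iter l alpha q.1) (iter l alpha q.2)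
  = \sum_(p <- r) \sum_(q <- r) G p.1 p.2 q.1 q.2.
Proof.
move=> G_bil12 G_bil34.
under eq_bigr => p _ do rewrite (alpha_inv_iter l (f := G _ _)) //.
rewrite exchange_big [RHS]exchange_big; apply: eq_bigr => q _.
exact: (alpha_inv_iter k (f := fun x y => G x y q.1 q.2)).
Qed.

End AlphaInvariance.

Section HomAssociativeBrackets.
Variables (T : Type) (mu : T -> T -> T) (alpha : T -> T).
Hypotheses (alpha_mul : forall x y, alpha (mu x y) = mu (alpha x) (alpha y))
           (mu_hassoc : forall x y z, mu (alpha x) (mu y z) = mu (mu x y) (alpha z)).

Definition rb_form (a b u v w : T) : T :=
  mu (mu (mu (alpha u) (alpha (alpha a))) (alpha (alpha v)))
     (mu (alpha (alpha (alpha b))) (alpha (alpha w))).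

Lemma rb_form_mul_Rterms a b x y x' y' :
  mu (mu (alpha (alpha (alpha x))) (mu (alpha (alpha a)) (alpha (alpha y))))
     (mu (alpha (alpha (alpha x'))) (mu (alpha (alpha b)) (alpha (alpha y'))))
  = rb_form a b (alpha x) (mu y x') (alpha y').
Proof.
rewrite /rb_form (mu_hassoc (alpha (alpha x))).
set P := mu (alpha (alpha x)) (alpha (alpha a)).
have -> : mu (alpha (alpha (alpha x'))) (mu (alpha (alpha b)) (alpha (alpha y')))
          = alpha (mu (alpha (alpha x')) (mu (alpha b) (alpha y'))) by rewrite !alpha_mul.
rewrite -(mu_hassoc P (alpha (alpha (alpha y)))).
by rewrite (mu_hassoc (alpha (alpha y)) (alpha (alpha x'))) (mu_hassoc P) !alpha_mul.
Qed.

Lemma rb_form_Rterm_mull a b x y x' y' :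
  mu (alpha (alpha (alpha (alpha x))))
     (mu (mu (mu (alpha x') (mu a y')) (alpha (alpha b))) (alpha (alpha (alpha y))))
  = rb_form a b (mu x x') (alpha y') (alpha y).
Proof.
rewrite /rb_form (mu_hassoc (alpha (alpha (alpha x)))) (mu_hassoc (alpha (alpha x))).
rewrite -(mu_hassoc (mu (alpha (alpha x)) (mu (alpha x') (mu a y')))); congr (mu _ _).
rewrite !alpha_mul -(mu_hassoc (mu (alpha x) (alpha x')) (alpha (alpha a))) !alpha_mul.
by rewrite (mu_hassoc (alpha (alpha x))) !alpha_mul.
Qed.

Lemma rb_form_Rterm_mulr a b x y x' y' :
  mu (alpha (alpha (alpha (alpha x))))
     (mu (mu (alpha (alpha a)) (mu (alpha x') (mu b y'))) (alpha (alpha (alpha y))))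
  = rb_form a b (alpha x) (alpha x') (mu y' y).
Proof.
rewrite /rb_form (mu_hassoc (alpha (alpha (alpha x)))) (mu_hassoc (alpha (alpha x))).
set P := mu (alpha (alpha x)) (alpha (alpha a)).
rewrite -(mu_hassoc P (alpha (mu (alpha x') (mu b y'))) (alpha (alpha (alpha y)))).
have -> : mu (mu P (alpha (alpha (alpha x')))) (mu (alpha (alpha (alpha b))) (alpha (alpha (mu y' y))))
          = mu (alpha P) (mu (alpha (alpha (alpha x'))) (mu (alpha (alpha b)) (alpha (mu y' y)))).
  by rewrite (mu_hassoc P) !alpha_mul.
congr (mu _ _).
rewrite !alpha_mul (mu_hassoc (alpha (alpha x'))) (mu_hassoc (alpha x') (alpha b) (alpha y')).
by rewrite -(mu_hassoc (mu (alpha x') (alpha b)) (alpha (alpha y')) (alpha (alpha y))) !alpha_mul.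
Qed.

End HomAssociativeBrackets.

Section RotaBaxterOperator.
Variables (K : fieldType) (A : lmodType K) (mu : A -> A -> A) (alpha : A -> A)
          (r : seq (A * A)).
Hypotheses (mu_bil : bilinearP mu) (alpha_lin : linear alpha)
           (alpha_mul : forall x y, alpha (mu x y) = mu (alpha x) (alpha y))
           (mu_hassoc : forall x y z, mu (alpha x) (mu y z) = mu (mu x y) (alpha z))
           (r_inv : alpha_inv alpha r).

Local Notation R := (Rop mu alpha r).

Lemma mu_linearl c u v w : mu (c *: u + v) w = c *: mu u w + mu v w.
Proof. exact: mu_bil.2. Qed.

Lemma mu_linearr c u v w : mu w (c *: u + v) = c *: mu w u + mu w v.
Proof. exact: mu_bil.1. Qed.

Lemma mu_suml I (s : seq I) (E : I -> A) c :
  mu (\sum_(i <- s) E i) c = \sum_(i <- s) mu (E i) c.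
Proof. exact: (linear_fun_sum (mu_bil.2 c)). Qed.

Lemma mu_sumr I (s : seq I) (E : I -> A) c :
  mu c (\sum_(i <- s) E i) = \sum_(i <- s) mu c (E i).
Proof. exact: (linear_fun_sum (mu_bil.1 c)). Qed.

Local Ltac multilinear :=
  repeat split; move=> *; move=> c u v /=;
  rewrite ?(alpha_lin, mu_linearl, mu_linearr) //.

Lemma Rop_linear : linear R.
Proof.
move=> c u v; rewrite /Rop scaler_sumr -big_split; apply: eq_bigr => p _.
by rewrite mu_linearl mu_linearr.
Qed.

Lemma Rop_alpha a : R (alpha a) = alpha (R a).
Proof.
rewrite /Rop (linear_fun_sum alpha_lin).
under [RHS]eq_bigr => p _ do rewrite !alpha_mul.
rewrite (alpha_inv_iter alpha_lin r_inv 1 (f := fun u v => mu (alpha u) (mu (alpha a) v))) //.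
by multilinear.
Qed.

Lemma Rop_alpha2_mul a b :
  mu (R (alpha (alpha a))) (R (alpha (alpha b)))
  = \sum_(p <- r) \sum_(q <- r) rb_form mu alpha a b (alpha p.1) (mu p.2 q.1) (alpha q.2).
Proof.
rewrite /Rop mu_suml; under eq_bigr => p _ do rewrite mu_sumr.
rewrite -(alpha_inv_iter2 alpha_lin r_inv 2 2 (G := fun x y x' y' =>
   mu (mu (alpha x) (mu (alpha (alpha a)) y)) (mu (alpha x') (mu (alpha (alpha b)) y')))) ; [|by multilinear..].
by apply: eq_bigr => p _; apply: eq_bigr => q _; exact: rb_form_mul_Rterms.
Qed.

Lemma Rop_mul_Rop_alpha2 a b :
  R (mu (R a) (alpha (alpha b)))
  = \sum_(p <- r) \sum_(q <- r) rb_form mu alpha a b (mu p.1 q.1) (alpha q.2) (alpha p.2).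
Proof.
rewrite /Rop; under eq_bigr => p _ do rewrite !mu_suml mu_sumr.
rewrite -(alpha_inv_iter2 alpha_lin r_inv 3 0 (G := fun x y x' y' =>
   mu (alpha x) (mu (mu (mu (alpha x') (mu a y')) (alpha (alpha b))) y))) ; [|by multilinear..].
by apply: eq_bigr => p _; apply: eq_bigr => q _; exact: rb_form_Rterm_mull.
Qed.

Lemma Rop_alpha2_mul_Rop a b :
  R (mu (alpha (alpha a)) (R b))
  = \sum_(p <- r) \sum_(q <- r) rb_form mu alpha a b (alpha p.1) (alpha q.1) (mu q.2 p.2).
Proof.
rewrite /Rop; under eq_bigr => p _ do rewrite mu_sumr mu_suml mu_sumr.
rewrite -(alpha_inv_iter2 alpha_lin r_inv 3 0 (G := fun x y x' y' =>
   mu (alpha x) (mu (mu (alpha (alpha a)) (mu (alpha x') (mu b y'))) y))) ; [|by multilinear..].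
by apply: eq_bigr => p _; apply: eq_bigr => q _; exact: rb_form_Rterm_mulr.
Qed.

Lemma rb_form_trilinear a b : trilinearP (rb_form mu alpha a b).
Proof. by rewrite /rb_form; multilinear. Qed.

End RotaBaxterOperator.

Theorem mainTheorem10 (K : fieldType) (A : lmodType K)
    (mu : A -> A -> A) (alpha : A -> A) (r : seq (A * A)) :
  hom_assoc mu alpha -> alpha_inv alpha r -> AHYBE mu alpha r ->
  (forall a, Rop mu alpha r (alpha a) = alpha (Rop mu alpha r a)) /\
  (forall a b,
     mu (Rop mu alpha r (alpha (alpha a))) (Rop mu alpha r (alpha (alpha b)))
     = Rop mu alpha r (mu (alpha (alpha a)) (Rop mu alpha r b)
                       + mu (Rop mu alpha r a) (alpha (alpha b)))).
Proof.
move=> [mu_bil alpha_lin alpha_mul mu_hassoc] r_inv ybe.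
split=> [a|a b]; first exact: Rop_alpha.
have := ybe A _ (rb_form_trilinear mu_bil alpha_lin a b).
rewrite big_cat /= !big_allpairs_dep /= => ybe_ab.
rewrite (linear_fun_add (Rop_linear alpha r mu_bil)).
rewrite Rop_alpha2_mul_Rop // Rop_mul_Rop_alpha2 // Rop_alpha2_mul // ybe_ab.
by rewrite addrC.
Qed.
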